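(* Let $D\ge3$ and $n=2^D-1$, with coordinates indexed by $\mathbb F_2^D\setminus\{0\}$. Let $C\subseteq\mathbb F_2^n$ be the span of the restrictions to $\mathbb F_2^D\setminus\{0\}$ of the evaluation vectors of $1,x_1,\dots,x_D$ (the punctured first-order Reed–Muller code). Let $H_X$ be the single all-ones row of length $n$ and let $H_Z$ be any matrix with $\mathrm{rs}(H_Z)=C^\perp$. Then $(H_X,H_Z)$ is a CSS code with $k=D$, $d_X=2^{D-1}-1$ and $d_Z=2$, and it is phantom.
   Context: The evaluation vector of a Boolean polynomial $f$ in $x_1,\dots,x_D$ is $(f(a))_a$. $C^\perp$ is the dual code with respect to the standard dot product. CSS conventions: a CSS code is specified by $H_X,H_Z$ over $\mathbb F_2$ with $H_XH_Z^T=0$; $k=n-\operatorname{rank}H_X-\operatorname{rank}H_Z$; $d_X=\min\{|v|:v\in\ker H_Z\setminus\mathrm{rs}(H_X)\}$, $d_Z=\min\{|v|:v\in\ker H_X\setminus\mathrm{rs}(H_Z)\}$, where $\mathrm{rs}$ is row space and $\ker M=\{v:Mv^T=0\}$. A CSS logical basis is $L_X,L_Z\in\mathbb F_2^{k\times n}$ with rows of $L_X$ in $\ker H_Z$, rows of $L_Z$ in $\ker H_X$, $L_XL_Z^T=I_k$. A permutation with matrix $P$ implements the logical CNOT circuit $A\in GL(k,\mathbb F_2)$ if $\mathrm{rs}(H_XP)=\mathrm{rs}(H_X)$, $\mathrm{rs}(H_ZP)=\mathrm{rs}(H_Z)$, rows of $L_XP-AL_X$ lie in $\mathrm{rs}(H_X)$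 and rows of $L_ZP-A^{-T}L_Z$ lie in $\mathrm{rs}(H_Z)$. The code is phantom if some CSS logical basis admits, for every ordered pair $a\ne b$ in $[k]$, a permutation implementing $I_k+E_{ab}$ ($E_{ab}$ the matrix unit). *)

From HB Require Import structures.
From mathcomp Require Import all_boot all_order all_algebra all_fingroup.
Set Implicit Arguments. Unset Strict Implicit. Unset Printing Implicit Defensive.
Import GRing.Theory.
Local Open Scope ring_scope.

Notation F2 := 'F_2.

Definition wt n (v : 'rV[F2]_n) : nat := #|[set j | v 0 j != 0]|.

(* Coordinates of F_2^D \ {0}: column i : 'I_(2^D-1) is the nonzero vector
   whose j-th coordinate (j < D) is bit j of i+1. *)
Definition coordpt (D : nat) (i : nat) (j : nat) : F2 := (odd (i.+1 %/ 2 ^ j))%:R.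

(* Generator matrix of the punctured first-order Reed-Muller code:
   row 0 = evaluation vector of 1, row j+1 = evaluation vector of x_{j+1},
   restricted to F_2^D \ {0}. *)
Definition prm_gen (D : nat) : 'M[F2]_(D.+1, 2 ^ D - 1) :=
  \matrix_(r < D.+1, i < 2 ^ D - 1)
     (if (r : nat) == 0%N then 1 else coordpt D i (r : nat).-1).

Definition in_dual m n (G : 'M[F2]_(m, n)) (v : 'rV[F2]_n) : Prop :=
  forall c : 'rV[F2]_n, (c <= G)%MS -> v *m c^T = 0.

Definition is_css m1 m2 n (HX : 'M[F2]_(m1, n)) (HZ : 'M[F2]_(m2, n)) : Prop :=
  HX *m HZ^T = 0.

Definition css_k m1 m2 n (HX : 'M[F2]_(m1, n)) (HZ : 'M[F2]_(m2, n)) : nat :=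
  (n - \rank HX - \rank HZ)%N.

Definition is_min_weight n (P : 'rV[F2]_n -> Prop) (d : nat) : Prop :=
  (exists v, P v /\ wt v = d) /\ (forall v, P v -> (d <= wt v)%N).

Definition dX_is m1 m2 n (HX : 'M[F2]_(m1, n)) (HZ : 'M[F2]_(m2, n)) (d : nat) :=
  is_min_weight (fun v => HZ *m v^T = 0 /\ ~~ (v <= HX)%MS) d.

Definition dZ_is m1 m2 n (HX : 'M[F2]_(m1, n)) (HZ : 'M[F2]_(m2, n)) (d : nat) :=
  is_min_weight (fun v => HX *m v^T = 0 /\ ~~ (v <= HZ)%MS) d.

Definition logical_basis m1 m2 n k (HX : 'M[F2]_(m1, n)) (HZ : 'M[F2]_(m2, n))
    (LX LZ : 'M[F2]_(k, n)) : Prop :=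
  HZ *m LX^T = 0 /\ HX *m LZ^T = 0 /\ LX *m LZ^T = 1%:M.

Definition implements m1 m2 n k (HX : 'M[F2]_(m1, n)) (HZ : 'M[F2]_(m2, n))
    (LX LZ : 'M[F2]_(k, n)) (P : 'M[F2]_n) (A : 'M[F2]_k) : Prop :=
  (HX *m P == HX)%MS /\ (HZ *m P == HZ)%MS /\
  (LX *m P - A *m LX <= HX)%MS /\ (LZ *m P - (invmx A)^T *m LZ <= HZ)%MS.

Definition is_phantom m1 m2 n (HX : 'M[F2]_(m1, n)) (HZ : 'M[F2]_(m2, n)) : Prop :=
  exists LX LZ : 'M[F2]_(css_k HX HZ, n),
    logical_basis HX HZ LX LZ /\
    forall a b : 'I_(css_k HX HZ), a != b ->
      exists s : 'S_n, implements HX HZ LX LZ (perm_mx s) (1%:M + delta_mx a b).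

From HB Require Import structures.
From mathcomp Require Import all_boot all_order all_algebra all_fingroup.
From mathcomp Require Import zify.
Set Implicit Arguments. Unset Strict Implicit. Unset Printing Implicit Defensive.
Import GRing.Theory.
Local Open Scope ring_scope.

(* The code
   C = rs(prm_gen D) consists of the affine functions x |-> c + <u, x> on these
   points, and ker H_Z = C (double duality).  A nonconstant affine function is
   nonzero on exactly half of F_2^D, and the punctured origin removes one
   nonzero value exactly when c = 1: this gives d_X = 2^(D-1) - 1.  ker H_X is
   the even-weight code, and any weight-2 vector outside C^perp gives d_Z = 2.
   Take L_X to be the coordinate functions x_1, ..., x_D.  Every A in
   GL(D, F_2) permutes the nonzero points by x |-> x A^T; the induced coordinate
   permutation fixes the all-ones row, preserves C and hence C^perp, and maps
   L_X to A L_X, so it implements A.  In particular every CNOT I + E_ab is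
   implemented, i.e. the code is phantom. *)

Lemma F2_addrr (x : F2) : x + x = 0.
Proof. exact: (addrr_pchar2 (pchar_Fp (isT : prime 2))). Qed.

Lemma F2_neq0 (x : F2) : (x != 0) = (x == 1).
Proof. by case: x => [[|[|]]]. Qed.

Lemma F2_addr_neq0 (x y : F2) : (x + y != 0) = (y == 1 + x).
Proof. by case: x => [[|[|]] ?] //; case: y => [[|[|]] ?]. Qed.

Lemma F2_natb_inj : injective (fun b : bool => (b%:R : F2)).
Proof. by case; case. Qed.

Lemma F2_natr k : (k%:R : F2) = (odd k)%:R.
Proof. by rewrite -modn2 Fp_nat_mod. Qed.

Lemma mx_F2_addrr m n (X : 'M[F2]_(m, n)) : X + X = 0.
Proof. by apply/matrixP => i j; rewrite !mxE F2_addrr. Qed.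

Lemma eq_from_bits k p q : (p < 2 ^ k)%N -> (q < 2 ^ k)%N ->
  (forall j, (j < k)%N -> odd (p %/ 2 ^ j) = odd (q %/ 2 ^ j)) -> p = q.
Proof.
elim: k p q => [|k IH] p q hp hq h.
  by move: hp hq {h}; rewrite expn0; case: p; case: q.
have h0 := h 0%N isT; rewrite expn0 !divn1 in h0.
have half : (p %/ 2 = q %/ 2)%N.
  apply: IH; rewrite ?ltn_divLR // -?expnSr // => j hj.
  by rewrite -!divnMA -expnS; exact: h.
by rewrite -(odd_double_half p) -(odd_double_half q) -!divn2 half h0.
Qed.

Lemma const_mx_perm (R : pzSemiRingType) m n (a : R) (s : 'S_n) :
  (const_mx a : 'M_(m, n)) *m perm_mx s = const_mx a.
Proof. by rewrite -[s]invgK -col_permE; apply/matrixP => i j; rewrite !mxE. Qed.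

Lemma mulmx_trmxA (R : comPzSemiRingType) a b c (X : 'M[R]_(a, b)) (P : 'M_b) (Y : 'M_(c, b)) :
  X *m P *m Y^T = X *m (Y *m P^T)^T.
Proof. by rewrite trmx_mul trmxK mulmxA. Qed.

Lemma unitmx_transvection (R : comUnitRingType) n (a b : 'I_n) :
  a != b -> (1%:M + delta_mx a b : 'M[R]_n) \in unitmx.
Proof.
move=> ab; have EE : delta_mx a b *m delta_mx a b = 0 :> 'M[R]_n.
  by rewrite mul_delta_mx_0 // eq_sym.
have inv : (1%:M + delta_mx a b) *m (1%:M - delta_mx a b) = 1%:M :> 'M[R]_n.
  by rewrite mulmxDl !mulmxBr !mul1mx mulmx1 EE subr0 subrK.
by case: (mulmx1_unit inv).
Qed.

Lemma delta_mx_neq0 n (k : 'I_n) : (delta_mx 0 k : 'rV[F2]_n) != 0.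
Proof. by apply/eqP => /rowP/(_ k); rewrite !mxE !eqxx. Qed.

Lemma delta_mx_add_neq0 n (k k' : 'I_n) :
  k != k' -> (delta_mx 0 k + delta_mx 0 k' : 'rV[F2]_n) != 0.
Proof. by move=> kk'; apply/eqP => /rowP/(_ k); rewrite !mxE !eqxx (negPf kk') addr0. Qed.

Lemma delta_pairs_mul (R : pzSemiRingType) k n p (a b : 'I_k -> 'I_n) (Y : 'M[R]_(n, p)) :
  (\matrix_(i < k) (delta_mx 0 (a i) + delta_mx 0 (b i))) *m Y =
  \matrix_(i < k) (row (a i) Y + row (b i) Y).
Proof. by apply/row_matrixP => i; rewrite row_mul !rowK mulmxDl -!rowE. Qed.

Lemma dot_delta n (u : 'rV[F2]_n) k : ((delta_mx 0 k : 'rV_n) *m u^T) 0 0 = u 0 k.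
Proof. by rewrite -rowE !mxE. Qed.

Lemma wt_eq0 n (v : 'rV[F2]_n) : (wt v == 0%N) = (v == 0).
Proof.
rewrite /wt cards_eq0; apply/eqP/eqP => [v0 | ->].
  by apply/rowP => j; have /setP/(_ j) := v0; rewrite !inE mxE => /negbFE/eqP.
by apply/setP => j; rewrite !inE mxE eqxx.
Qed.

Lemma sum_F2_wt n (v : 'rV[F2]_n) : \sum_j v 0 j = (wt v)%:R.
Proof.
rewrite (bigID (fun j => v 0 j != 0)) /= [X in _ + X]big1 => [|j /negbNE/eqP //].
rewrite addr0 /wt -sumr_const; apply: eq_big => [j | j]; first by rewrite inE.
by rewrite F2_neq0 => /eqP.
Qed.

Lemma wt_delta2 n (p q : 'I_n) : p != q -> wt (delta_mx 0 p + delta_mx 0 q) = 2%N.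
Proof.
move=> pq; rewrite -[RHS]/(true.+1) -pq -cards2 /wt; apply: eq_card => j.
rewrite !inE !mxE /=; have [-> | jp] := eqVneq j p.
  by rewrite (negPf pq) addr0.
by case: (j == q); rewrite ?add0r.
Qed.

Lemma card_dot_eq D (u : 'rV[F2]_D) (b : F2) : u != 0 ->
  #|[set x : 'rV[F2]_D | (x *m u^T) 0 0 == b]| = (2 ^ (D - 1))%N.
Proof.
move=> u_neq0; have /existsP [k] : [exists k, u 0 k != 0].
  apply: contraR u_neq0 => /existsPn u0; apply/eqP/rowP => k.
  by rewrite mxE; apply/eqP/negbNE/u0.
rewrite F2_neq0 => /eqP uk1; have D_gt0 : (0 < D)%N := leq_ltn_trans (leq0n k) (ltn_ord k).
pose S b := [set x : 'rV[F2]_D | (x *m u^T) 0 0 == b].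
have dot_shift (x : 'rV[F2]_D) : ((x + delta_mx 0 k) *m u^T) 0 0 = (x *m u^T) 0 0 + 1.
  by rewrite mulmxDl -rowE mxE; congr (_ + _); rewrite !mxE uk1.
have S1E : S 1 = [set x + delta_mx 0 k | x in S 0].
  apply/setP => x; rewrite inE; apply/eqP/imsetP => [x1 | [y]].
    exists (x + delta_mx 0 k); last by rewrite -addrA mx_F2_addrr addr0.
    by rewrite inE dot_shift x1 F2_addrr.
  by rewrite inE => /eqP y0 ->; rewrite dot_shift y0 add0r.
have card_S1 : #|S 1| = #|S 0| by rewrite S1E card_imset //; exact: addIr.
have S0C : ~: S 0 = S 1 by apply/setP => x; rewrite !inE F2_neq0.
have := cardsC (S 0); rewrite S0C card_S1 card_mx card_Fp // mul1n.
rewrite -[D in (2 ^ D)%N](subnK D_gt0) addn1 expnS => card_S0.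
have {card_S0} card_S0 : #|S 0| = (2 ^ (D - 1))%N by lia.
have [-> | ] := eqVneq b 0; first exact: card_S0.
by rewrite F2_neq0 => /eqP ->; rewrite -card_S0 -card_S1.
Qed.

Section DualCode.

Variables (F : fieldType) (r m n : nat) (G : 'M[F]_(r, n)) (H : 'M[F]_(m, n)).
Hypothesis HG : (H == kermx G^T)%MS.

Lemma dual_orth p (Y : 'M[F]_(p, n)) : (Y <= G)%MS -> H *m Y^T = 0.
Proof.
have /sub_kermxP HGt0 := proj1 (andP HG).
by case/submxP => W ->; rewrite trmx_mul mulmxA HGt0 mul0mx.
Qed.

Lemma sub_dual p (X : 'M[F]_(p, n)) : X *m G^T = 0 -> (X <= H)%MS.
Proof. by move/sub_kermxP/submx_trans; apply; case/andP: HG. Qed.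

Lemma dual_dual_sub p (V : 'M[F]_(p, n)) : H *m V^T = 0 -> (V <= G)%MS.
Proof.
move=> HV0; have ker_sub : (kermx G^T <= kermx (col_mx G V)^T)%MS.
  have /submxP [W ->] := proj2 (andP HG).
  by rewrite sub_kermx tr_col_mx mul_mx_row -!mulmxA HV0 dual_orth ?mulmx0 ?row_mx0.
have := mxrankS ker_sub; rewrite !mxrank_ker !mxrank_tr => rank_le.
have := rank_leq_col (col_mx G V); have := rank_leq_col G => rankG_le rankGV_le.
have G_sub : (G <= col_mx G V)%MS by rewrite -addsmxE addsmxSl.
suff : (col_mx G V <= G)%MS by rewrite col_mx_sub => /andP [].
by rewrite -(mxrank_leqif_sup G_sub).2 eqn_leq (mxrank_leqif_sup G_sub).1 /=; lia.
Qed.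

Lemma mxrank_dual : \rank H = (n - \rank G)%N.
Proof. by rewrite (eqmx_rank HG) mxrank_ker mxrank_tr. Qed.

Lemma dual_perm_eqmx (P : 'M[F]_n) :
  P \in unitmx -> stablemx G P^T -> (H *m P == H)%MS.
Proof.
move=> P_unit GP_sub; have HP_sub : (H *m P <= H)%MS.
  by apply: sub_dual; rewrite -mulmxA -[P *m G^T]trmxK trmx_mul trmxK dual_orth.
rewrite -(mxrank_leqif_eq HP_sub).2 mxrankMfree ?row_free_unit //.
Qed.

End DualCode.

Lemma in_dualE r n (G : 'M[F2]_(r, n)) v : in_dual G v <-> v *m G^T = 0.
Proof.
split=> [Gv | Gv c /submxP [w ->]]; last by rewrite trmx_mul mulmxA Gv mul0mx.
apply/rowP => i; have := Gv _ (row_sub i G).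
by rewrite tr_row colE mulmxA -colE => /colP/(_ 0); rewrite !mxE.
Qed.

Lemma dual_kermx r n (G : 'M[F2]_(r, n)) m (H : 'M[F2]_(m, n)) :
  (forall v, (v <= H)%MS <-> in_dual G v) -> (H == kermx G^T)%MS.
Proof.
move=> HG; apply/andP; split; apply/row_subP => i.
  by rewrite sub_kermx; apply/eqP/in_dualE/HG/row_sub.
by apply/HG/in_dualE; rewrite -row_mul mulmx_ker row0.
Qed.

Section Points.

Variable D : nat.
Local Notation n := (2 ^ D - 1)%N.

Definition point (i : 'I_n) : 'rV[F2]_D := \row_(j < D) coordpt D i j.

Lemma point_index_lt (i : 'I_n) : (i.+1 < 2 ^ D)%N.
Proof. have := ltn_ord i; have := expn_gt0 2 D; lia. Qed.

Lemma point_inj : injective point.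
Proof.
move=> i i' /rowP eq_ii'; apply/val_inj/succn_inj.
apply: (eq_from_bits (point_index_lt i) (point_index_lt i')) => j lt_jD.
by apply: F2_natb_inj; have := eq_ii' (Ordinal lt_jD); rewrite !mxE.
Qed.

Lemma point_neq0 (i : 'I_n) : point i != 0.
Proof.
apply/eqP => /rowP point0; suff : i.+1 = 0%N by [].
apply: (eq_from_bits (point_index_lt i) (expn_gt0 2 D)) => j lt_jD.
by apply: F2_natb_inj; have := point0 (Ordinal lt_jD); rewrite !mxE div0n.
Qed.

Lemma points_nonzero : [set point i | i in 'I_n] = [set x : 'rV[F2]_D | x != 0].
Proof.
apply/eqP; rewrite eqEcard card_imset ?card_ord; last exact: point_inj.
have -> : #|[set x : 'rV[F2]_D | x != 0]| = n.
  have := cardsC1 (0 : 'rV[F2]_D); rewrite card_mx card_Fp // mul1n subn1 => <-.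
  by apply: eq_card => x; rewrite !inE.
rewrite leqnn andbT; apply/subsetP => _ /imsetP [i _ ->].
by rewrite inE point_neq0.
Qed.

Lemma point_onto (x : 'rV[F2]_D) : x != 0 -> exists i, point i = x.
Proof.
move=> x_neq0; have : x \in [set point i | i in 'I_n] by rewrite points_nonzero inE.
by case/imsetP => i _ ->; exists i.
Qed.

Definition unpoint (i0 : 'I_n) (x : 'rV[F2]_D) : 'I_n :=
  odflt i0 [pick i | point i == x].

Lemma unpointK i0 (x : 'rV[F2]_D) : x != 0 -> point (unpoint i0 x) = x.
Proof.
move=> /point_onto [i <-]; rewrite /unpoint.
by case: pickP => [j /eqP // | /(_ i)]; rewrite eqxx.
Qed.

Lemma card_point_set (P : pred 'rV[F2]_D) :
  #|[set i | P (point i)]| = #|[set x | (x != 0) && P x]|.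
Proof.
rewrite -(card_imset _ point_inj); apply: eq_card => x; rewrite inE.
apply/imsetP/andP => [[i] | [/point_onto [i <-] Pi]].
  by rewrite inE => Pi ->; rewrite point_neq0.
by exists i; rewrite ?inE.
Qed.

Lemma exists_perm_point_mul (N : 'M[F2]_D) : N \in unitmx ->
  exists t : 'S_n, forall i, point (t i) = point i *m N.
Proof.
move=> N_unit; have N_free : row_free N by rewrite row_free_unit.
have pointN_neq0 i : point i *m N != 0.
  by rewrite -(mul0mx 1 N) (inj_eq (row_free_inj N_free)) point_neq0.
pose f i := unpoint i (point i *m N).
have fE i : point (f i) = point i *m N := unpointK i (pointN_neq0 i).
have f_inj : injective f.
  by move=> i i' /(congr1 point); rewrite !fE => /(row_free_inj N_free)/point_inj.
by exists (perm f_inj) => i; rewrite permE.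
Qed.

Lemma perm_point_mulV (t : 'S_n) (N : 'M[F2]_D) : N \in unitmx ->
  (forall i, point (t i) = point i *m N) -> forall i, point ((t^-1)%g i) = point i *m invmx N.
Proof. by move=> N_unit tN i; rewrite -[in RHS](permKV t i) tN -mulmxA mulmxV ?mulmx1. Qed.

End Points.

Section PuncturedReedMuller.

Variable D : nat.
Local Notation n := (2 ^ D - 1)%N.
Local Notation HX := (const_mx 1 : 'M[F2]_(1, n)).

Definition coord_mx : 'M[F2]_(D, n) := \matrix_(j, i) point i 0 j.

Lemma coord_mxE (u : 'rV[F2]_D) i : (u *m coord_mx) 0 i = (point i *m u^T) 0 0.
Proof. by rewrite !mxE; apply: eq_bigr => j _; rewrite !mxE mulrC. Qed.

Lemma coord_mx_perm (t : 'S_n) (N : 'M[F2]_D) :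
  (forall i, point (t i) = point i *m N) -> coord_mx *m perm_mx (t^-1)%g = N^T *m coord_mx.
Proof.
move=> tN; rewrite -col_permE; apply/matrixP => b i.
by rewrite [LHS]mxE [LHS]mxE tN !mxE; apply: eq_bigr => c _; rewrite !mxE mulrC.
Qed.

Lemma prm_gen_col : prm_gen D = col_mx HX coord_mx :> 'M_(1 + D, n).
Proof.
by apply/matrixP => r i; rewrite !mxE; case: splitP => k ->; rewrite ?ord1 !mxE.
Qed.

Lemma HX_sub_prm_gen : (HX <= prm_gen D)%MS.
Proof.
by have := submx_refl (col_mx HX coord_mx); rewrite col_mx_sub -prm_gen_col => /andP [].
Qed.

Lemma coord_mx_sub_prm_gen : (coord_mx <= prm_gen D)%MS.
Proof.
by have := submx_refl (col_mx HX coord_mx); rewrite col_mx_sub -prm_gen_col => /andP [].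
Qed.

Lemma prm_gen_mulE (w : 'rV[F2]_(1 + D)) :
  w *m prm_gen D = lsubmx w 0 0 *: HX + rsubmx w *m coord_mx.
Proof.
by rewrite -{1}(hsubmxK w) prm_gen_col mul_row_col {1}[lsubmx w]mx11_scalar mul_scalar_mx.
Qed.

Lemma submx_prm_genP (v : 'rV[F2]_n) :
  reflect (exists c u, v = c *: HX + u *m coord_mx) (v <= prm_gen D)%MS.
Proof.
apply: (iffP idP) => [/submxP [w ->] | [c [u ->]]].
  by exists (lsubmx (w : 'rV_(1 + D)) 0 0), (rsubmx (w : 'rV_(1 + D))); rewrite prm_gen_mulE.
rewrite addmx_sub ?scalemx_sub ?HX_sub_prm_gen //.
exact: submx_trans (submxMl _ _) coord_mx_sub_prm_gen.
Qed.

Hypothesis hD : (2 <= D)%N.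

Let k0 : 'I_D := Ordinal (ltnW hD).
Let k1 : 'I_D := Ordinal hD.

Lemma k0_neq_k1 : k0 != k1.
Proof. by []. Qed.

Lemma coord_mx_const (u : 'rV[F2]_D) (a : F2) : u *m coord_mx = a *: HX -> u = 0 /\ a = 0.
Proof.
move=> /rowP uX; have dot_a (x : 'rV[F2]_D) : x != 0 -> (x *m u^T) 0 0 = a.
  by move=> /point_onto [i <-]; have := uX i; rewrite coord_mxE !mxE mulr1.
have u_a k : u 0 k = a by rewrite -dot_delta dot_a ?delta_mx_neq0.
have a0 : a = 0.
  by have := dot_a _ (delta_mx_add_neq0 k0_neq_k1); rewrite mulmxDl mxE !dot_delta !u_a F2_addrr.
by split=> //; apply/rowP => k; rewrite u_a a0 mxE.
Qed.

Lemma prm_gen_row_free : row_free (prm_gen D).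
Proof.
apply/inj_row_free => w wG0; pose w' : 'rV_(1 + D) := w.
have /coord_mx_const [r0 /eqP] : rsubmx w' *m coord_mx = - lsubmx w' 0 0 *: HX.
  by apply/eqP; rewrite scaleNr -addr_eq0 addrC -prm_gen_mulE wG0.
rewrite oppr_eq0 => /eqP l0; rewrite -[w]/w' -(hsubmxK w') r0.
by rewrite [lsubmx w']mx11_scalar l0 raddf0 row_mx0.
Qed.

Lemma rank_prm_gen : \rank (prm_gen D) = D.+1.
Proof. exact/eqP/prm_gen_row_free. Qed.

Lemma prm_codewordE (c : F2) (u : 'rV[F2]_D) i :
  (c *: HX + u *m coord_mx) 0 i = c + (point i *m u^T) 0 0.
Proof. by rewrite mxE coord_mxE; congr (_ + _); rewrite !mxE mulr1. Qed.

Lemma wt_prm_codeword (c : F2) (u : 'rV[F2]_D) : u != 0 ->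
  (wt (c *: HX + u *m coord_mx) + (c != 0%R))%N = (2 ^ (D - 1))%N.
Proof.
move=> u_neq0; rewrite -(card_dot_eq (1 + c) u_neq0) (cardsD1 (0 : 'rV[F2]_D)) inE mul0mx mxE addnC.
have -> : (0 == 1 + c) = (c != 0) by case: c => [[|[|]] ?].
congr (_ + _)%N; rewrite /wt.
transitivity #|[set i | (point i *m u^T) 0 0 == 1 + c]|.
  by apply: eq_card => i; rewrite !inE prm_codewordE F2_addr_neq0.
by rewrite (card_point_set (fun x => (x *m u^T) 0 0 == 1 + c)); apply: eq_card => x; rewrite !inE.
Qed.

Variables (m : nat) (HZ : 'M[F2]_(m, n)).
Hypothesis HZ_dual : (HZ == kermx (prm_gen D)^T)%MS.

Lemma HZ_HX_orth : HZ *m HX^T = 0.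
Proof. exact: (dual_orth HZ_dual HX_sub_prm_gen). Qed.

Lemma HZ_coord_orth : HZ *m coord_mx^T = 0.
Proof. exact: (dual_orth HZ_dual coord_mx_sub_prm_gen). Qed.

Lemma sub_HZ p (X : 'M[F2]_(p, n)) :
  X *m HX^T = 0 -> X *m coord_mx^T = 0 -> (X <= HZ)%MS.
Proof.
move=> XHX XLX; apply: (sub_dual HZ_dual).
(* The [col_mx] lemmas need the row count of [prm_gen D] written as [1 + D]. *)
change (X *m (prm_gen D : 'M_(1 + D, n))^T = 0).
by rewrite prm_gen_col tr_col_mx mul_mx_row XHX XLX row_mx0.
Qed.

Lemma prm_css : is_css HX HZ.
Proof. by rewrite /is_css -[HX]trmxK -trmx_mul HZ_HX_orth trmx0. Qed.

Lemma prm_css_k : css_k HX HZ = D.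
Proof.
have le_Dn : (D.+1 <= n)%N by rewrite -rank_prm_gen rank_leq_col.
have HX_neq0 : HX != 0.
  by apply/eqP => /rowP/(_ (Ordinal (leq_trans (ltn0Sn D) le_Dn)))/eqP; rewrite !mxE.
rewrite /css_k rank_rV HX_neq0 (mxrank_dual HZ_dual) rank_prm_gen; lia.
Qed.

Lemma row_coord_mx_tr i : row i coord_mx^T = point i.
Proof. by apply/rowP => k; rewrite !mxE. Qed.

Lemma HX_mul_tr_eq0 (v : 'rV[F2]_n) : (HX *m v^T == 0) = ~~ odd (wt v).
Proof.
have -> : (HX *m v^T == 0) = ((HX *m v^T) 0 0 == 0).
  by apply/eqP/eqP => [-> | v0]; [rewrite mxE | apply/matrixP => i j; rewrite !ord1 v0 mxE].
rewrite mxE (eq_bigr (fun j => v 0 j)) => [|j _]; last by rewrite !mxE mul1r.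
by rewrite sum_F2_wt F2_natr; case: odd.
Qed.

Lemma prm_dX : dX_is HX HZ (2 ^ (D - 1) - 1)%N.
Proof.
split.
  pose e0 : 'rV[F2]_D := delta_mx 0 k0; have e0_neq0 : e0 != 0 := delta_mx_neq0 k0.
  exists (1 *: HX + e0 *m coord_mx); split; [split|].
  - by apply: (dual_orth HZ_dual); apply/submx_prm_genP; exists 1, e0.
  - apply/negP => /sub_rVP [a v_a].
    have : e0 *m coord_mx = (a - 1) *: HX by rewrite scalerBl -v_a addrAC subrr add0r.
    by case/coord_mx_const => /eqP; rewrite (negPf e0_neq0).
  - by have := wt_prm_codeword 1 e0_neq0; rewrite oner_neq0; lia.
move=> v [HZv v_notin].
have /submx_prm_genP [c [u v_cu]] := dual_dual_sub HZ_dual HZv.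
have [u0 | u_neq0] := eqVneq u 0.
  by case/negP: v_notin; rewrite v_cu u0 mul0mx addr0 scalemx_sub.
by have := wt_prm_codeword c u_neq0; rewrite -v_cu; lia.
Qed.

Lemma prm_dZ : dZ_is HX HZ 2.
Proof.
split.
  have [p p_k0] := point_onto (delta_mx_neq0 k0).
  have [q q_k1] := point_onto (delta_mx_neq0 k1).
  pose v : 'rV[F2]_n := delta_mx 0 p + delta_mx 0 q.
  have v_coord : v *m coord_mx^T = delta_mx 0 k0 + delta_mx 0 k1.
    by rewrite mulmxDl -!rowE !row_coord_mx_tr p_k0 q_k1.
  have v_notin : ~~ (v <= HZ)%MS.
    apply/negP => /submxP [w v_w]; move: v_coord.
    rewrite v_w -mulmxA HZ_coord_orth mulmx0 => /esym/eqP.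
    by rewrite (negPf (delta_mx_add_neq0 k0_neq_k1)).
  have pq : p != q.
    by apply: contraNneq v_notin => pq; rewrite /v pq mx_F2_addrr sub0mx.
  exists v; split; [split|] => //; last exact: wt_delta2.
  by apply/eqP; rewrite HX_mul_tr_eq0 wt_delta2.
move=> v [/eqP HXv v_notin]; rewrite leqNgt; apply: contra v_notin => wt_lt2.
suff /eqP -> : v == 0 by rewrite sub0mx.
by rewrite -wt_eq0; move: HXv wt_lt2; rewrite HX_mul_tr_eq0; case: (wt v) => [|[|]].
Qed.

Lemma prm_logical_basis : exists LZ, logical_basis HX HZ coord_mx LZ.
Proof.
have [i0 _] := point_onto (delta_mx_neq0 k0).
pose other a : 'I_D := if a == k0 then k1 else k0.
have other_neq a : a != other a.
  by rewrite /other; case: (eqVneq a k0) => [-> | //]; exact: k0_neq_k1.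
pose p a := unpoint i0 (delta_mx 0 a + delta_mx 0 (other a)).
pose q a := unpoint i0 (delta_mx 0 (other a)).
(* Row a of LZ is supported on the points e_a + e_c and e_c, with c != a, so its
   pairing with the coordinate function x_b is (e_a)_b. *)
pose LZ : 'M[F2]_(D, n) := \matrix_(a < D) (delta_mx 0 (p a) + delta_mx 0 (q a)).
have LZ_HX : LZ *m HX^T = 0.
  by rewrite delta_pairs_mul; apply/matrixP => a j; rewrite !mxE F2_addrr.
have LZ_LX : LZ *m coord_mx^T = 1%:M.
  rewrite delta_pairs_mul; apply/row_matrixP => a.
  rewrite rowK !row_coord_mx_tr !unpointK ?delta_mx_neq0 ?delta_mx_add_neq0 //.
  by rewrite -addrA mx_F2_addrr addr0 rowE mulmx1.
exists LZ; split; first exact: HZ_coord_orth.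
split; first by rewrite -[HX]trmxK -trmx_mul LZ_HX trmx0.
by rewrite -[coord_mx]trmxK -trmx_mul LZ_LX trmx1.
Qed.

Lemma prm_implements (LZ : 'M[F2]_(D, n)) (A : 'M[F2]_D) :
  logical_basis HX HZ coord_mx LZ -> A \in unitmx ->
  exists s : 'S_n, implements HX HZ coord_mx LZ (perm_mx s) A.
Proof.
move=> [_ [HX_LZ LX_LZ]] A_unit; have AT_unit : A^T \in unitmx by rewrite unitmx_tr.
have LZ_HX : LZ *m HX^T = 0 by rewrite -[LZ]trmxK -trmx_mul HX_LZ trmx0.
have LZ_LX : LZ *m coord_mx^T = 1%:M by rewrite -[LZ]trmxK -trmx_mul LX_LZ trmx1.
have [t tA] := exists_perm_point_mul AT_unit.
set P : 'M[F2]_n := perm_mx (t^-1)%g.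
have LX_P : coord_mx *m P = A *m coord_mx by rewrite (coord_mx_perm tA) trmxK.
have LX_PT : coord_mx *m P^T = invmx A *m coord_mx.
  by rewrite tr_perm_mx (coord_mx_perm (perm_point_mulV AT_unit tA)) -trmx_inv trmxK.
have HX_PT : HX *m P^T = HX by rewrite tr_perm_mx const_mx_perm.
have G_PT : stablemx (prm_gen D) P^T.
  change ((prm_gen D : 'M_(1 + D, n)) *m P^T <= prm_gen D)%MS.
  rewrite {1}prm_gen_col mul_col_mx HX_PT LX_PT col_mx_sub HX_sub_prm_gen /=.
  exact: submx_trans (submxMl _ _) coord_mx_sub_prm_gen.
exists (t^-1)%g; split; [|split; [|split]].
- by rewrite const_mx_perm submx_refl.
- exact: (dual_perm_eqmx HZ_dual (unitmx_perm _ _) G_PT).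
- by rewrite LX_P subrr sub0mx.
apply: sub_HZ; rewrite mulmxBl mulmx_trmxA -mulmxA.
  by rewrite HX_PT LZ_HX mulmx0 subrr.
by rewrite LX_PT LZ_LX trmx_mul mulmxA LZ_LX mul1mx mulmx1 subrr.
Qed.

Lemma prm_phantom : is_phantom HX HZ.
Proof.
rewrite /is_phantom prm_css_k; have [LZ LZ_basis] := prm_logical_basis.
exists coord_mx, LZ; split=> // a b ab.
exact: (prm_implements LZ_basis (unitmx_transvection _ ab)).
Qed.

End PuncturedReedMuller.

Unset Implicit Arguments.

Theorem mainTheorem13 (D : nat) (hD : (3 <= D)%N) (m : nat)
    (HZ : 'M[F2]_(m, 2 ^ D - 1))
    (hHZ : forall v : 'rV[F2]_(2 ^ D - 1), (v <= HZ)%MS <-> in_dual (prm_gen D) v) :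
  let HX : 'M[F2]_(1, 2 ^ D - 1) := const_mx 1 in
  is_css HX HZ /\ css_k HX HZ = D /\
  dX_is HX HZ (2 ^ (D - 1) - 1)%N /\ dZ_is HX HZ 2 /\ is_phantom HX HZ.
Proof.
move=> HX; have hD2 : (2 <= D)%N := ltnW hD.
have HZ_dual := dual_kermx hHZ.
split; first exact (prm_css HZ_dual).
split; first exact (prm_css_k hD2 HZ_dual).
split; first exact (prm_dX hD2 HZ_dual).
split; first exact (prm_dZ hD2 HZ_dual).
exact (prm_phantom hD2 HZ_dual).
Qed.
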